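(* For every $*$-term $P\land^\circ Q$ with $P\in P^*$ and $Q\in P^d$, the tree $se(P\land^\circ Q)$ has exactly one conjunction decomposition, namely $(se(P)[\mathsf T\mapsto\triangle],\,se(Q))$, and has no disjunction decomposition. For every $*$-term $P\lor^\circ Q$ with $P\in P^*$ and $Q\in P^c$, the tree $se(P\lor^\circ Q)$ has no conjunction decomposition and has exactly one disjunction decomposition, namely $(se(P)[\mathsf F\mapsto\triangle],\,se(Q))$.
   Context: Let $A$ be a nonempty set of atoms; terms are closed terms over constants $\mathsf T,\mathsf F$, atoms $a\in A$, unary $\neg$, binary $\land^\circ$, $\lor^\circ$. Evaluation trees $\mathcal T_A$: $\mathsf T,\mathsf F\in\mathcal T_A$ and $(X\unlhd a\unrhd Y)\in\mathcal T_A$ for $X,Y\in\mathcal T_A$, $a\in A$; depth $d(\mathsf T)=d(\mathsf F)=0$, $d(Y\unlhd a\unrhd Z)=1+\max(d(Y),d(Z))$. $\mathcal T_{A,\triangle}$: the same with leaves in $\{\mathsf T,\mathsf F,\triangle\}$. Leaf replacement $X[\ell_1\mapsto Y_1,\ldots]$ replaces every leaf labelled $\ell_i$ by $Y_i$. $se$: $se(\mathsf T)=\mathsf T$, $se(\mathsf F)=\mathsf F$, $se(a)=\mathsf T\unlhd a\unrhd\mathsf F$, $se(\neg P)=se(P)[\mathsf T\mapsto\mathsf F,\mathsf F\mapsto\mathsf T]$, $se(P\land^\circ Q)=se(P)[\mathsf T\mapsto se(Q)]$, $se(P\lor^\circ Q)=se(P)[\mathsf F\mapsto se(Q)]$. Syntactic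 categories ($a\in A$): $\mathsf T$-terms $P^{\mathsf T}::=\mathsf T\mid(a\land^\circ P^{\mathsf T})\lor^\circ P^{\mathsf T}$; $\mathsf F$-terms $P^{\mathsf F}::=\mathsf F\mid(a\lor^\circ P^{\mathsf F})\land^\circ P^{\mathsf F}$; $\ell$-terms $P^\ell::=(a\land^\circ P^{\mathsf T})\lor^\circ P^{\mathsf F}\mid(\neg a\land^\circ P^{\mathsf T})\lor^\circ P^{\mathsf F}$; $*$-terms $P^*::=P^c\mid P^d$, $P^c::=P^\ell\mid P^*\land^\circ P^d$, $P^d::=P^\ell\mid P^*\lor^\circ P^c$. A pair $(Y,Z)\in\mathcal T_{A,\triangle}\times\mathcal T_A$ is a candidate conjunction decomposition (ccd) of $X\in\mathcal T_A$ if $X=Y[\triangle\mapsto Z]$, $Y$ contains $\triangle$, $Y$ contains $\mathsf F$ but not $\mathsf T$, and $Z$ contains both $\mathsf T$ and $\mathsf F$; it is a candidate disjunction decomposition (cdd) if the same holds with ''$Y$ contains $\mathsf T$ but not $\mathsf F$'' instead. A ccd $(Y,Z)$ of $X$ is a conjunction decomposition (cd) if there is no other ccd $(Y',Z')$ of $X$ with $d(Z')<d(Z)$; similarly a cdd $(Y,Z)$ is a disjunction decomposition (dd) if there is no other cdd $(Y',Z')$ of $X$ with $d(Z')<d(Z)$. *)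

From Stdlib Require Import Arith.

Section Defs.
Variable A : Type.

(* Closed terms over T, F, atoms, negation, left-sequential conj/disj *)
Inductive term : Type :=
| tT : term
| tF : term
| tAtom : A -> term
| tNeg : term -> term
| tAnd : term -> term -> term
| tOr : term -> term -> term.

Inductive tree : Type :=
| LT : tree
| LF : tree
| LTri : tree
| Node : tree -> A -> tree -> tree.

Inductive leaf := lT | lF | lTri.

Definition leaf_tree (l : leaf) : tree :=
  match l with lT => LT | lF => LF | lTri => LTri end.

Fixpoint contains (X : tree) (l : leaf) : bool :=
  match X with
  | LT => match l with lT => true | _ => false end
  | LF => match l with lF => true | _ => false end
  | LTri => match l with lTri => true | _ => false end
  | Node Y _ Z => contains Y l || contains Z l
  end.

Definition in_TA (X : tree) : Prop := contains X lTri = false.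

Fixpoint depth (X : tree) : nat :=
  match X with
  | Node Y _ Z => S (Nat.max (depth Y) (depth Z))
  | _ => 0
  end.

Fixpoint repl (X : tree) (YT YF Ytri : tree) : tree :=
  match X with
  | LT => YT
  | LF => YF
  | LTri => Ytri
  | Node Y a Z => Node (repl Y YT YF Ytri) a (repl Z YT YF Ytri)
  end.

Definition replT X Y := repl X Y LF LTri.
Definition replF X Y := repl X LT Y LTri.
Definition replTri X Y := repl X LT LF Y.

Fixpoint se (P : term) : tree :=
  match P with
  | tT => LT
  | tF => LF
  | tAtom a => Node LT a LF
  | tNeg P => repl (se P) LF LT LTri
  | tAnd P Q => replT (se P) (se Q)
  | tOr P Q => replF (se P) (se Q)
  end.

Inductive is_Tterm : term -> Prop :=
| TtT : is_Tterm tT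
| TtCons : forall a P Q, is_Tterm P -> is_Tterm Q ->
    is_Tterm (tOr (tAnd (tAtom a) P) Q).

Inductive is_Fterm : term -> Prop :=
| FtF : is_Fterm tF
| FtCons : forall a P Q, is_Fterm P -> is_Fterm Q ->
    is_Fterm (tAnd (tOr (tAtom a) P) Q).

Inductive is_lterm : term -> Prop :=
| lt_pos : forall a P Q, is_Tterm P -> is_Fterm Q ->
    is_lterm (tOr (tAnd (tAtom a) P) Q)
| lt_neg : forall a P Q, is_Tterm P -> is_Fterm Q ->
    is_lterm (tOr (tAnd (tNeg (tAtom a)) P) Q).

Inductive is_cterm : term -> Prop :=
| c_l : forall P, is_lterm P -> is_cterm P
| c_and : forall P Q, is_starterm P -> is_dterm Q -> is_cterm (tAnd P Q)
with is_dterm : term -> Prop :=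
| d_l : forall P, is_lterm P -> is_dterm P
| d_or : forall P Q, is_starterm P -> is_cterm Q -> is_dterm (tOr P Q)
with is_starterm : term -> Prop :=
| s_c : forall P, is_cterm P -> is_starterm P
| s_d : forall P, is_dterm P -> is_starterm P.

Definition ccd (X Y Z : tree) : Prop :=
  in_TA Z /\ X = replTri Y Z /\
  contains Y lTri = true /\ contains Y lF = true /\ contains Y lT = false /\
  contains Z lT = true /\ contains Z lF = true.

Definition cdd (X Y Z : tree) : Prop :=
  in_TA Z /\ X = replTri Y Z /\
  contains Y lTri = true /\ contains Y lT = true /\ contains Y lF = false /\
  contains Z lT = true /\ contains Z lF = true.

Definition cd (X Y Z : tree) : Prop :=
  ccd X Y Z /\ ~ (exists Y' Z', ccd X Y' Z' /\ (Y', Z') <> (Y, Z) /\ depth Z' < depth Z).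

Definition dd (X Y Z : tree) : Prop :=
  cdd X Y Z /\ ~ (exists Y' Z', cdd X Y' Z' /\ (Y', Z') <> (Y, Z) /\ depth Z' < depth Z).

End Defs.

Arguments tT {A}. Arguments tF {A}. Arguments LT {A}. Arguments LF {A}. Arguments LTri {A}.
Arguments is_starterm {A} _. Arguments is_cterm {A} _. Arguments is_dterm {A} _.
Arguments is_Tterm {A} _. Arguments is_Fterm {A} _. Arguments is_lterm {A} _.
Arguments se {A} _. Arguments replT {A} _ _. Arguments replF {A} _ _. Arguments replTri {A} _ _.
Arguments repl {A} _ _ _ _. Arguments contains {A} _ _. Arguments depth {A} _. Arguments in_TA {A} _.
Arguments ccd {A} _ _ _. Arguments cdd {A} _ _ _. Arguments cd {A} _ _ _. Arguments dd {A} _ _ _.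
Arguments tAtom {A} _. Arguments tNeg {A} _. Arguments tAnd {A} _ _. Arguments tOr {A} _ _.
Arguments Node {A} _ _ _.

From Stdlib Require Import Arith Lia Bool.

(* Call X = W[△ ↦ Z] a proper split of X when W ≠ △ contains △ and Z ∈ T_A contains
   both T and F (Z is bivalent); a ccd is a proper split whose context W has no T-leaf,
   a cdd one whose context has no F-leaf.  By simultaneous induction on the grammar, se of
   a c-term has no F-free proper split, se of a d-term no T-free one, and se of a *-term
   none avoiding both T and F: an F-free split of S[T ↦ Z] must sit below an F-leaf of S,
   and peeling Z off it leaves a split of S avoiding T and F.
   Now let X = se(P)[T ↦ se(Q)] with Q a d-term.  Comparing a ccd (Y, Z) of X with X leaf
   by leaf shows that it is either (se(P)[T ↦ △], se(Q)) or has depth Z > depth se(Q), so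
   the former is the unique cd; a cdd of X would be an F-free split of the c-term P ∧° Q.
   Disjunctions reduce to conjunctions by the symmetry exchanging the leaves T and F. *)

Ltac contains_cases :=
  repeat match goal with
         | H : @eq bool ?x ?y |- _ =>
             match type of H with context [contains _ _] => revert H end
         end;
  simpl;
  repeat match goal with |- context [contains ?X ?l] => destruct (contains X l) end;
  simpl; intros; try discriminate; try congruence; auto.

Section Trees.
Context {A : Type}.
Implicit Types (X Y Z S U W a b c : tree A) (l : leaf).

Lemma contains_repl X a b c l :
  contains (repl X a b c) l =
  (contains X lT && contains a l) || (contains X lF && contains b l)
  || (contains X lTri && contains c l).
Proof. induction X; destruct l; simpl; try rewrite IHX1, IHX2; contains_cases. Qed.

Lemma repl_id X : repl X LT LF LTri = X.
Proof. induction X; simpl; congruence. Qed.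

Lemma repl_ext X a b c a' b' c' :
  (contains X lT = true -> a = a') -> (contains X lF = true -> b = b') ->
  (contains X lTri = true -> c = c') -> repl X a b c = repl X a' b' c'.
Proof.
  induction X as [| | |X1 IH1 x X2 IH2]; simpl; auto.
  intros ha hb hc; f_equal; [apply IH1 | apply IH2]; intros E;
    first [apply ha | apply hb | apply hc]; rewrite E; auto using orb_true_r.
Qed.

Lemma replT_noT S Z : contains S lT = false -> replT S Z = S.
Proof. intros H; unfold replT; rewrite <- (repl_id S) at 2; apply repl_ext; congruence. Qed.

Lemma replTri_noTri W Z : contains W lTri = false -> replTri W Z = W.
Proof. intros H; unfold replTri; rewrite <- (repl_id W) at 2; apply repl_ext; congruence. Qed.

Lemma repl_repl X a b c d e f :
  repl (repl X a b c) d e f = repl X (repl a d e f) (repl b d e f) (repl c d e f).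
Proof. induction X; simpl; congruence. Qed.

Lemma depth_repl_le X a b c l :
  contains X l = true -> depth (repl (leaf_tree A l) a b c) <= depth (repl X a b c).
Proof.
  induction X as [| | |X1 IH1 x X2 IH2]; destruct l; simpl; intros H;
    try discriminate; try lia;
    (destruct (orb_prop _ _ H) as [H' | H']; [specialize (IH1 H') | specialize (IH2 H')]);
    simpl in *; lia.
Qed.

Lemma depth_repl_lt X1 x X2 a b c l :
  contains (Node X1 x X2) l = true ->
  depth (repl (leaf_tree A l) a b c) < depth (repl (Node X1 x X2) a b c).
Proof.
  simpl; intros H; destruct (orb_prop _ _ H) as [H'|H'];
    [pose proof (depth_repl_le X1 a b c l H') | pose proof (depth_repl_le X2 a b c l H')];
    lia.
Qed.

Lemma replT_fixed U Z : replT U Z = Z -> contains Z lT = true -> U = LT.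
Proof.
  intros H HZ; destruct U as [| | |U1 u U2]; auto;
    try (cbn in H; subst; discriminate).
  destruct (contains (Node U1 u U2) lT) eqn:E.
  - pose proof (depth_repl_lt U1 u U2 Z LF LTri lT E) as D.
    unfold replT in H; rewrite H in D; simpl in D; lia.
  - rewrite (replT_noT _ _ E) in H; subst; congruence.
Qed.

Lemma replT_inj S U Z : contains Z lT = true -> replT S Z = replT U Z -> S = U.
Proof.
  intros HZ; revert U; induction S as [| | |S1 IH1 s S2 IH2]; intros U H.
  - exact (eq_sym (replT_fixed U Z (eq_sym H) HZ)).
  - destruct U; cbn in H; try congruence; subst; discriminate.
  - destruct U; cbn in H; try congruence; subst; discriminate.
  - destruct U as [| | |U1 u U2]; try discriminate.
    + discriminate (replT_fixed _ _ H HZ).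
    + unfold replT in *; simpl in H; injection H as H1 -> H2; f_equal; auto.
Qed.

Definition bivalent X := in_TA X /\ contains X lT = true /\ contains X lF = true.

Definition proper_split X W Z :=
  W <> LTri /\ contains W lTri = true /\ bivalent Z /\ X = replTri W Z.

Definition T_free_split X := exists W Z, contains W lT = false /\ proper_split X W Z.
Definition F_free_split X := exists W Z, contains W lF = false /\ proper_split X W Z.
Definition TF_free_split X :=
  exists W Z, contains W lT = false /\ contains W lF = false /\ proper_split X W Z.

Lemma TF_free_split_T X : TF_free_split X -> T_free_split X.
Proof. intros (W & Z & HT & _ & HW); exists W, Z; auto. Qed.

Lemma TF_free_split_F X : TF_free_split X -> F_free_split X.
Proof. intros (W & Z & _ & HF & HW); exists W, Z; auto. Qed.

Lemma ccd_T_free_split X Y Z : ccd X Y Z -> T_free_split X.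
Proof.
  intros (HZ & HX & HYtri & HYF & HYT & HZT & HZF).
  exists Y, Z; repeat split; auto; intros ->; discriminate.
Qed.

Lemma cdd_F_free_split X Y Z : cdd X Y Z -> F_free_split X.
Proof.
  intros (HZ & HX & HYtri & HYT & HYF & HZT & HZF).
  exists Y, Z; repeat split; auto; intros ->; discriminate.
Qed.

Lemma bivalent_replT S Z : bivalent S -> bivalent Z -> bivalent (replT S Z).
Proof.
  unfold bivalent, in_TA, replT; rewrite !contains_repl.
  intros (HS & HST & HSF) (HZ & HZT & HZF); repeat split; contains_cases.
Qed.

Lemma bivalent_replF S Z : bivalent S -> bivalent Z -> bivalent (replF S Z).
Proof.
  unfold bivalent, in_TA, replF; rewrite !contains_repl.
  intros (HS & HST & HSF) (HZ & HZT & HZF); repeat split; contains_cases.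
Qed.

Lemma replT_eq_replTri_cases S Z Y Z' :
  contains Z lT = true -> ~ T_free_split Z -> bivalent Z' -> contains Y lT = false ->
  replT S Z = replTri Y Z' ->
  (Y = replT S LTri /\ Z' = Z) \/ depth Z < depth Z' \/ (contains S lT = false /\ Y = S).
Proof.
  (* The last alternative only serves the induction, for subtrees of S without T. *)
  intros HZT HnT HZ'; pose proof HZ' as (HZ'tri & HZ'T & HZ'F); revert Y.
  induction S as [| | |S1 IH1 s S2 IH2]; intros Y HY H.
  - destruct Y as [| | |Y1 y Y2]; try discriminate.
    + cbn in H; subst; discriminate.
    + left; auto.
    + destruct (contains (Node Y1 y Y2) lTri) eqn:E.
      * exfalso; apply HnT; exists (Node Y1 y Y2), Z'.
        repeat split; auto; discriminate.
      * rewrite replTri_noTri in H by exact E; cbn in H; subst; congruence.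
  - destruct Y as [| | |Y1 y Y2]; try discriminate.
    + right; right; auto.
    + cbn in H; subst; discriminate.
  - destruct Y as [| | |Y1 y Y2]; cbn in H; try discriminate; subst; discriminate.
  - destruct Y as [| | |Y1 y Y2]; try discriminate.
    + change (replT (Node S1 s S2) Z = Z') in H.
      destruct (contains (Node S1 s S2) lT) eqn:E.
      * right; left; rewrite <- H; exact (depth_repl_lt S1 s S2 Z LF LTri lT E).
      * rewrite replT_noT in H by exact E; subst; congruence.
    + simpl in HY; apply orb_false_iff in HY as [HY1 HY2].
      unfold replT, replTri in H; simpl in H; injection H as H1 -> H2.
      destruct (IH1 _ HY1 H1) as [[-> ->] | [D1 | [T1 ->]]];
      destruct (IH2 _ HY2 H2) as [[-> E2] | [D2 | [T2 ->]]];
      try (right; left; assumption).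
      * left; auto.
      * left; split; auto; unfold replT; simpl; f_equal; exact (eq_sym (replT_noT _ _ T2)).
      * left; split; auto; unfold replT; simpl; f_equal; exact (eq_sym (replT_noT _ _ T1)).
      * right; right; simpl; rewrite T1, T2; auto.
Qed.

Lemma replT_eq_replTri_F_free S Z W Z' :
  contains W lF = false -> contains Z' lT = true -> contains S lF = true ->
  replT S Z = replTri W Z' -> exists U, contains U lT = true /\ Z' = replT U Z.
Proof.
  revert W; induction S as [| | |S1 IH1 s S2 IH2]; intros W HW HZ' HS H; try discriminate.
  - destruct W; cbn in H; try discriminate; subst; discriminate.
  - destruct W as [| | |W1 w W2]; try discriminate.
    + exists (Node S1 s S2); split; [|exact (eq_sym H)].
      change (replT (Node S1 s S2) Z = Z') in H; unfold replT in H.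
      rewrite <- H, contains_repl in HZ'; revert HZ'; contains_cases.
    + simpl in HW, HS; apply orb_false_iff in HW as [HW1 HW2].
      unfold replT, replTri in H; simpl in H; injection H as H1 _ H2.
      destruct (orb_prop _ _ HS) as [HS1 | HS2];
        [exact (IH1 W1 HW1 HZ' HS1 H1) | exact (IH2 W2 HW2 HZ' HS2 H2)].
Qed.

Lemma replT_eq_replTri_replT S Z W U :
  contains Z lT = true -> contains Z lF = true -> contains U lT = true ->
  contains W lF = false -> replT S Z = replTri W (replT U Z) ->
  contains W lT = false /\ S = replTri W U.
Proof.
  intros HZT HZF HU; revert W; induction S as [| | |S1 IH1 s S2 IH2]; intros W HW H.
  - destruct W as [| | |W1 w W2]; try discriminate.
    + cbn in H; subst; discriminate.
    + split; auto; cbn; exact (eq_sym (replT_fixed U Z (eq_sym H) HZT)).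
    + destruct (contains (Node W1 w W2) lTri) eqn:E.
      * pose proof (depth_repl_lt W1 w W2 LT LF (replT U Z) lTri E) as D1.
        pose proof (depth_repl_le U Z LF LTri lT HU) as D2.
        unfold replTri in H; rewrite <- H in D1; unfold replT in *; simpl in D1, D2; lia.
      * rewrite replTri_noTri in H by exact E; cbn in H; subst; congruence.
  - destruct W; try discriminate; cbn in H; try discriminate.
    assert (C := f_equal (fun t => contains t lT) H); cbn in C; unfold replT in C.
    rewrite contains_repl in C; revert C; contains_cases.
  - destruct W; try discriminate; cbn in H; try discriminate.
    assert (C := f_equal (fun t => contains t lT) H); cbn in C; unfold replT in C.
    rewrite contains_repl in C; revert C; contains_cases.
  - destruct W as [| | |W1 w W2]; try discriminate.
    + split; auto; exact (replT_inj _ _ _ HZT H).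
    + simpl in HW; apply orb_false_iff in HW as [HW1 HW2].
      unfold replT, replTri in H; simpl in H; injection H as H1 -> H2.
      destruct (IH1 _ HW1 H1) as [T1 ->], (IH2 _ HW2 H2) as [T2 ->].
      simpl; rewrite T1, T2; auto.
Qed.

Lemma no_F_free_split_replT S Z :
  contains S lF = true -> bivalent Z -> ~ TF_free_split S -> ~ F_free_split (replT S Z).
Proof.
  intros HSF [HZ [HZT HZF]] HnS (W & Z' & HWF & HWne & HWtri & (HZ' & HZ'T & HZ'F) & HX).
  destruct (replT_eq_replTri_F_free S Z W Z' HWF HZ'T HSF HX) as (U & HUT & ->).
  destruct (replT_eq_replTri_replT S Z W U HZT HZF HUT HWF HX) as [HWT ->].
  apply HnS; exists W, U; repeat split; auto; unfold in_TA, replT, replTri in *.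
  - rewrite contains_repl in HZ'; revert HZ'; contains_cases.
  - rewrite contains_repl in HSF; revert HSF; contains_cases.
Qed.

Lemma ccd_replT S Z : bivalent S -> bivalent Z -> ccd (replT S Z) (replT S LTri) Z.
Proof.
  intros (HS & HST & HSF) (HZ & HZT & HZF); unfold ccd, in_TA, replT, replTri in *.
  repeat split; auto.
  - rewrite repl_repl; apply repl_ext; simpl; congruence.
  - rewrite contains_repl; revert HST; contains_cases.
  - rewrite contains_repl; revert HSF; contains_cases.
  - rewrite contains_repl; revert HS; contains_cases.
Qed.

Lemma cd_replT S Z Y Z0 : bivalent S -> bivalent Z -> ~ T_free_split Z ->
  cd (replT S Z) Y Z0 <-> Y = replT S LTri /\ Z0 = Z.
Proof.
  intros HS HZ HnT; pose proof HS as (_ & HST & _); pose proof HZ as (_ & HZT & _).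
  assert (ccd_cases : forall Y' Z', ccd (replT S Z) Y' Z' ->
            (Y' = replT S LTri /\ Z' = Z) \/ depth Z < depth Z').
  { intros Y' Z' (HZ' & HX & _ & _ & HY'T & HZ'T & HZ'F).
    destruct (replT_eq_replTri_cases S Z Y' Z' HZT HnT (conj HZ' (conj HZ'T HZ'F)) HY'T HX)
      as [C | [D | [E _]]]; auto; congruence. }
  split.
  - intros [Hc Hmin]; destruct (ccd_cases Y Z0 Hc) as [C | D]; auto.
    exfalso; apply Hmin; exists (replT S LTri), Z; split; [apply ccd_replT; auto |].
    split; [intros E; injection E; intros; subst; lia | exact D].
  - intros [-> ->]; split; [apply ccd_replT; auto |].
    intros (Y' & Z' & Hc & Hne & Hlt).
    destruct (ccd_cases Y' Z' Hc) as [[-> ->] | D]; [apply Hne; reflexivity | lia].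
Qed.

Lemma no_cd_of_no_T_free_split X Y Z : ~ T_free_split X -> ~ cd X Y Z.
Proof. intros Hn [Hc _]; exact (Hn (ccd_T_free_split _ _ _ Hc)). Qed.

Lemma no_dd_of_no_F_free_split X Y Z : ~ F_free_split X -> ~ dd X Y Z.
Proof. intros Hn [Hc _]; exact (Hn (cdd_F_free_split _ _ _ Hc)). Qed.

Fixpoint flip X : tree A :=
  match X with
  | LT => LF
  | LF => LT
  | LTri => LTri
  | Node Y a Z => Node (flip Y) a (flip Z)
  end.

Definition flip_leaf l : leaf := match l with lT => lF | lF => lT | lTri => lTri end.

Lemma flip_flip X : flip (flip X) = X.
Proof. induction X; simpl; congruence. Qed.

Lemma flip_inj_iff X Y : flip X = flip Y <-> X = Y.
Proof. split; [intros E; rewrite <- (flip_flip X), E; apply flip_flip | intros ->; auto]. Qed.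

Lemma contains_flip X l : contains (flip X) l = contains X (flip_leaf l).
Proof. induction X; destruct l; simpl; try rewrite IHX1, IHX2; reflexivity. Qed.

Lemma depth_flip X : depth (flip X) = depth X.
Proof. induction X; simpl; congruence. Qed.

Lemma flip_repl X a b c : flip (repl X a b c) = repl X (flip a) (flip b) (flip c).
Proof. induction X; simpl; congruence. Qed.

Lemma repl_flip X a b c : repl (flip X) a b c = repl X b a c.
Proof. induction X; simpl; congruence. Qed.

Lemma flip_replTri W Z : flip (replTri W Z) = replTri (flip W) (flip Z).
Proof. unfold replTri; rewrite flip_repl, repl_flip; reflexivity. Qed.

Lemma flip_replF S Z : flip (replF S Z) = replT (flip S) (flip Z).
Proof. unfold replF, replT; rewrite flip_repl, repl_flip; reflexivity. Qed.

Lemma bivalent_flip X : bivalent X -> bivalent (flip X).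
Proof. unfold bivalent, in_TA; rewrite !contains_flip; simpl; tauto. Qed.

Lemma proper_split_flip X W Z :
  proper_split X W Z -> proper_split (flip X) (flip W) (flip Z).
Proof.
  intros (HW & HWtri & HZ & ->); split; [destruct W; simpl; congruence |].
  rewrite contains_flip; split; [exact HWtri |].
  split; [exact (bivalent_flip Z HZ) | apply flip_replTri].
Qed.

Lemma T_free_split_flip X : T_free_split X -> F_free_split (flip X).
Proof.
  intros (W & Z & HW & HX); exists (flip W), (flip Z).
  rewrite contains_flip; split; [exact HW | exact (proper_split_flip _ _ _ HX)].
Qed.

Lemma TF_free_split_flip X : TF_free_split X -> TF_free_split (flip X).
Proof.
  intros (W & Z & HWT & HWF & HX); exists (flip W), (flip Z).
  rewrite !contains_flip; exact (conj HWF (conj HWT (proper_split_flip _ _ _ HX))).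
Qed.

Lemma ccd_flip X Y Z : ccd (flip X) (flip Y) (flip Z) <-> cdd X Y Z.
Proof.
  unfold ccd, cdd, in_TA; rewrite !contains_flip, <- flip_replTri, flip_inj_iff; simpl; tauto.
Qed.

Lemma dd_flip X Y Z : dd X Y Z <-> cd (flip X) (flip Y) (flip Z).
Proof.
  unfold dd, cd; rewrite ccd_flip, depth_flip.
  split; intros [Hc Hmin]; split; auto; intros (Y' & Z' & Hc' & Hne & Hlt); apply Hmin.
  - exists (flip Y'), (flip Z'); rewrite <- ccd_flip, !flip_flip, depth_flip.
    split; [exact Hc' |]; split; [| exact Hlt].
    intros E; injection E as <- <-; apply Hne; rewrite !flip_flip; reflexivity.
  - exists (flip Y'), (flip Z'); rewrite ccd_flip, depth_flip.
    split; [exact Hc' |]; split; [| exact Hlt].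
    intros E; injection E as E1 E2; apply Hne; rewrite flip_inj_iff in E1, E2; subst; reflexivity.
Qed.

Lemma no_T_free_split_replF S Z :
  contains S lT = true -> bivalent Z -> ~ TF_free_split S -> ~ T_free_split (replF S Z).
Proof.
  intros HST HZ HnS HT; apply T_free_split_flip in HT; rewrite flip_replF in HT.
  revert HT; apply no_F_free_split_replT.
  - rewrite contains_flip; exact HST.
  - exact (bivalent_flip Z HZ).
  - intros HS; apply HnS; rewrite <- (flip_flip S); exact (TF_free_split_flip _ HS).
Qed.

Lemma dd_replF S Z Y Z0 : bivalent S -> bivalent Z -> ~ F_free_split Z ->
  dd (replF S Z) Y Z0 <-> Y = replF S LTri /\ Z0 = Z.
Proof.
  intros HS HZ HnF.
  assert (HnT : ~ T_free_split (flip Z)).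
  { intros HT; apply HnF; rewrite <- (flip_flip Z); exact (T_free_split_flip _ HT). }
  rewrite dd_flip, flip_replF, (cd_replT _ _ _ _ (bivalent_flip S HS) (bivalent_flip Z HZ) HnT).
  replace (replT (flip S) LTri) with (flip (replF S LTri)) by apply flip_replF.
  rewrite !flip_inj_iff; reflexivity.
Qed.

Lemma proper_split_Node B1 x B2 W Z : proper_split (Node B1 x B2) W Z ->
  (contains B1 lT && contains B1 lF) || (contains B2 lT && contains B2 lF) = true.
Proof.
  intros (HW & HWtri & (_ & HZT & HZF) & HX).
  destruct W as [| | |W1 w W2]; try discriminate; [contradiction HW; reflexivity |].
  unfold replTri in HX; simpl in HX; injection HX as -> _ ->.
  rewrite !contains_repl; revert HWtri; contains_cases.
Qed.

Lemma se_Tterm (P : term A) : is_Tterm P ->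
  in_TA (se P) /\ contains (se P) lT = true /\ contains (se P) lF = false.
Proof.
  unfold in_TA; induction 1 as [| a P Q _ (p1 & p2 & p3) _ (q1 & q2 & q3)]; [simpl; auto |].
  cbn; rewrite !contains_repl; contains_cases.
Qed.

Lemma se_Fterm (P : term A) : is_Fterm P ->
  in_TA (se P) /\ contains (se P) lT = false /\ contains (se P) lF = true.
Proof.
  unfold in_TA; induction 1 as [| a P Q _ (p1 & p2 & p3) _ (q1 & q2 & q3)]; [simpl; auto |].
  cbn; rewrite !contains_repl; contains_cases.
Qed.

Lemma se_lterm (P : term A) : is_lterm P ->
  bivalent (se P) /\ forall W Z, ~ proper_split (se P) W Z.
Proof.
  intros [a P' Q HP HQ | a P' Q HP HQ];
    destruct (se_Tterm P' HP) as (p1 & p2 & p3), (se_Fterm Q HQ) as (q1 & q2 & q3);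
    [ change (se _) with (Node (replF (se P') (se Q)) a (se Q))
    | change (se _) with (Node (se Q) a (replF (se P') (se Q))) ];
    split; try (intros W Z HX; apply proper_split_Node in HX; revert HX);
    unfold bivalent, in_TA, replF in *; simpl; rewrite ?contains_repl; contains_cases.
Qed.

End Trees.

Scheme is_cterm_mut := Induction for is_cterm Sort Prop
  with is_dterm_mut := Induction for is_dterm Sort Prop
  with is_starterm_mut := Induction for is_starterm Sort Prop.
Combined Scheme is_term_category_mut from is_cterm_mut, is_dterm_mut, is_starterm_mut.

Lemma se_invariants {A : Type} :
  (forall P : term A, is_cterm P -> bivalent (se P) /\ ~ F_free_split (se P)) /\
  (forall P : term A, is_dterm P -> bivalent (se P) /\ ~ T_free_split (se P)) /\
  (forall P : term A, is_starterm P -> bivalent (se P) /\ ~ TF_free_split (se P)).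
Proof.
  apply (is_term_category_mut A
           (fun P _ => bivalent (se P) /\ ~ F_free_split (se P))
           (fun P _ => bivalent (se P) /\ ~ T_free_split (se P))
           (fun P _ => bivalent (se P) /\ ~ TF_free_split (se P))).
  - intros P HP; destruct (se_lterm P HP) as [HG Hn].
    split; [exact HG | intros (W & Z & _ & HX); exact (Hn W Z HX)].
  - intros P Q _ [HP HnP] _ [HQ _]; split; [exact (bivalent_replT _ _ HP HQ) |].
    exact (no_F_free_split_replT _ _ (proj2 (proj2 HP)) HQ HnP).
  - intros P HP; destruct (se_lterm P HP) as [HG Hn].
    split; [exact HG | intros (W & Z & _ & HX); exact (Hn W Z HX)].
  - intros P Q _ [HP HnP] _ [HQ _]; split; [exact (bivalent_replF _ _ HP HQ) |].
    exact (no_T_free_split_replF _ _ (proj1 (proj2 HP)) HQ HnP).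
  - intros P _ [HG Hn]; split; [exact HG | intros H; exact (Hn (TF_free_split_F _ H))].
  - intros P _ [HG Hn]; split; [exact HG | intros H; exact (Hn (TF_free_split_T _ H))].
Qed.

Theorem theorem3p6 (A : Type) :
  (forall P Q : term A, is_starterm P -> is_dterm Q ->
     let X := se (tAnd P Q) in
     (forall Y Z, cd X Y Z <-> (Y = replT (se P) LTri /\ Z = se Q)) /\
     (forall Y Z, ~ dd X Y Z)) /\
  (forall P Q : term A, is_starterm P -> is_cterm Q ->
     let X := se (tOr P Q) in
     (forall Y Z, ~ cd X Y Z) /\
     (forall Y Z, dd X Y Z <-> (Y = replF (se P) LTri /\ Z = se Q))).
Proof.
  destruct (@se_invariants A) as (Hc & Hd & Hs); split.
  - intros P Q HP HQ X; unfold X.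
    destruct (Hs P HP) as [HgP _], (Hd Q HQ) as [HgQ HnQ]; split; intros Y Z.
    + exact (cd_replT _ _ Y Z HgP HgQ HnQ).
    + apply no_dd_of_no_F_free_split, (Hc (tAnd P Q)), c_and; assumption.
  - intros P Q HP HQ X; unfold X.
    destruct (Hs P HP) as [HgP _], (Hc Q HQ) as [HgQ HnQ]; split; intros Y Z.
    + apply no_cd_of_no_T_free_split, (Hd (tOr P Q)), d_or; assumption.
    + exact (dd_replF _ _ Y Z HgP HgQ HnQ).
Qed.
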